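(* Let $\mathbf v=(v_1,\dots,v_m)$ and $\mathbf k=(k_1,\dots,k_m)$ be $m$-tuples of positive integers with $k_i\le v_i$ for all $i$ and $\sum_i k_i\ge2$. Let $\mathcal D$ be a ${\rm GC}(\mathbf v,\mathbf k,2)$ with $N$ blocks and let $I\subseteq\{1,\dots,m\}$ be non-empty. Then, provided $\mathbf k^I\neq(1)$, there exists a ${\rm GC}(\mathbf v^I,\mathbf k^I,2)$ with $N$ blocks, and in particular $C(\mathbf v,\mathbf k,2)\ge C(\mathbf v^I,\mathbf k^I,2)$.
   Context: For an $m$-tuple $\mathbf x$ and a non-empty $I\subseteq\{1,\dots,m\}$, the restriction $\mathbf x^I$ is the tuple of entries of $\mathbf x$ in positions from $I$ (in increasing order). For tuples $\mathbf v,\mathbf k$ of positive integers of the same length $n$ with $\mathbf k\le\mathbf v$ entrywise: let $X_1,\dots,X_n$ be pairwise disjoint sets with $|X_i|=v_i$; a block is an $n$-tuple $(B_1,\dots,B_n)$ with $B_i\subseteq X_i$, $|B_i|=k_i$; an $n$-tuple of sets $(T_1,\dots,T_n)$ is $(\mathbf v,\mathbf k,2)$-admissible if $T_i\subseteq X_i$, $|T_i|\le k_i$ and $\sum|T_i|=2$, and is contained in a block if $T_i\subseteq B_i$ for all $i$. A ${\rm GC}(\mathbf v,\mathbf k,2)$ is a finite family (repetitions allowed) of blocks containing every admissible tuple in at least one block; $C(\mathbf v,\mathbf k,2)$ is its minimum possible number of blocks, with $C=0$ if no design exists. *)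

From mathcomp Require Import all_boot.
From mathcomp Require Import boolp.
Set Implicit Arguments. Unset Strict Implicit. Unset Printing Implicit Defensive.

(* The ground set X_i is
   modelled as 'I_(v i); the sets X_i are disjoint by construction (they live
   in distinct types). *)
Definition settuple (m : nat) (v : 'I_m -> nat) := forall i : 'I_m, {set 'I_(v i)}.

Definition is_block m (v k : 'I_m -> nat) (B : settuple v) : Prop :=
  forall i, #|B i| = k i.

Definition admissible m (v k : 'I_m -> nat) (T : settuple v) : Prop :=
  (forall i, #|T i| <= k i) /\ \sum_(i < m) #|T i| = 2.

Definition contained_in m (v : 'I_m -> nat) (T B : settuple v) : Prop :=
  forall i, T i \subset B i.

(* A GC(v,k,2) with N blocks (repetitions allowed), given as an N-indexed family. *)
Definition is_GC m (v k : 'I_m -> nat) (N : nat) (D : 'I_N -> settuple v) : Prop :=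
  (forall j, is_block k (D j)) /\
  (forall T : settuple v, admissible k T -> exists j, contained_in T (D j)).

Definition GC_exists m (v k : 'I_m -> nat) (N : nat) : Prop :=
  exists D : 'I_N -> settuple v, is_GC k D.

(* C(v,k,2): minimum number of blocks of a GC(v,k,2), 0 if none exists. *)
Definition C_num m (v k : 'I_m -> nat) : nat :=
  match pselect (exists N, (fun n => `[< GC_exists v k n >]) N) with
  | left h => ex_minn h
  | right _ => 0
  end.

(* restriction x^I of an m-tuple to the positions in I, in increasing order *)
Definition restr m (I : {set 'I_m}) (x : 'I_m -> nat) : 'I_#|I| -> nat :=
  fun j => x (enum_val j).
Arguments restr {m} I x _.

From mathcomp Require Import all_boot.
From mathcomp Require Import boolp.

(* Restricting every block of a GC(v,k,2) to the coordinates in I gives a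
   GC(v^I,k^I,2) with the same number of blocks: an admissible tuple for the
   restricted parameters, extended by empty sets outside I, is admissible for
   (v,k), so it lies in some block, and hence in the restriction of that block. *)

Section Restriction.
Variables (m : nat) (v : 'I_m -> nat) (I : {set 'I_m}).

Definition restr_settuple (B : settuple v) : settuple (restr I v) :=
  fun j => B (enum_val j).

(* The types 'I_(v (enum_val j)) and 'I_(v i) are only propositionally equal
   when enum_val j = i, so points are matched through their values. *)
Definition extend_settuple (T : settuple (restr I v)) : settuple v := fun i =>
  [set x | [exists j, (enum_val j == i) && [exists y in T j, val y == val x]]].

Lemma extend_settuple_val (T : settuple (restr I v)) j :
  extend_settuple T (enum_val j) = T j.
Proof.
apply/setP => x; rewrite inE; apply/existsP/idP => [[j' /andP[/eqP ej]]|Tx].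
  move/enum_val_inj: ej => -> /existsP[y /andP[Ty /eqP/val_inj yx]].
  by rewrite -yx.
by exists j; rewrite eqxx /=; apply/existsP; exists x; rewrite Tx /=.
Qed.

Lemma extend_settuple_out (T : settuple (restr I v)) i :
  i \notin I -> extend_settuple T i = set0.
Proof.
move=> iNI; apply/setP => x; rewrite !inE; apply/existsP => -[j /andP[/eqP ej _]].
by move: iNI; rewrite -ej enum_valP.
Qed.

Lemma admissible_extend_settuple {k : 'I_m -> nat} {T : settuple (restr I v)} :
  admissible (restr I k) T -> admissible k (extend_settuple T).
Proof.
case=> T_le T_sum; split=> [i|].
  have [iI|iNI] := boolP (i \in I); last by rewrite extend_settuple_out ?cards0.
  by rewrite -(enum_rankK_in iI iI) extend_settuple_val; apply: T_le.
rewrite (bigID (mem I)) /= [X in _ + X]big1 ?addn0; last first.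
  by move=> i iNI; rewrite extend_settuple_out ?cards0.
by rewrite big_enum_val -T_sum; apply: eq_bigr => j _; rewrite extend_settuple_val.
Qed.

Lemma contained_in_restr_settuple (T : settuple (restr I v)) (B : settuple v) :
  contained_in (extend_settuple T) B -> contained_in T (restr_settuple B).
Proof. by move=> TB j; rewrite -extend_settuple_val; apply: TB. Qed.

Lemma is_GC_restr (k : 'I_m -> nat) N (D : 'I_N -> settuple v) :
  is_GC k D -> is_GC (restr I k) (fun b => restr_settuple (D b)).
Proof.
case=> D_block D_cover; split=> [b j|T T_adm]; first exact: D_block.
have [b Tb] := D_cover _ (admissible_extend_settuple T_adm).
by exists b; apply: contained_in_restr_settuple.
Qed.

Lemma GC_exists_restr (k : 'I_m -> nat) N :
  GC_exists v k N -> GC_exists (restr I v) (restr I k) N.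
Proof. by case=> D /is_GC_restr; exists (fun b => restr_settuple (D b)). Qed.

End Restriction.

Lemma C_num_le m m' (v k : 'I_m -> nat) (v' k' : 'I_m' -> nat) :
  (forall N, GC_exists v k N -> GC_exists v' k' N) ->
  (exists N, GC_exists v k N) -> C_num v' k' <= C_num v k.
Proof.
move=> GC_transfer [N GC_N]; rewrite /C_num.
case: pselect => [?|]; last first.
  by case; exists N; apply/asboolP; apply: GC_transfer.
case: pselect => [?|]; last by case; exists N; apply/asboolP.
case: ex_minnP => n' _ min_n'.
case: ex_minnP => n /asboolP GC_n _.
by apply/min_n'/asboolP/GC_transfer.
Qed.

Theorem proposition3p8 (m : nat) (v k : 'I_m -> nat)
  (kpos : forall i, 0 < k i) (kv : forall i, k i <= v i)
  (ksum : 2 <= \sum_(i < m) k i)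
  (N : nat) (D : 'I_N -> settuple v) (HD : is_GC k D)
  (I : {set 'I_m}) (HI : I != set0)
  (HkI : ~ (#|I| = 1 /\ forall j, restr I k j = 1)) :
  GC_exists (restr I v) (restr I k) N /\
  C_num (restr I v) (restr I k) <= C_num v k.
Proof.
have GC_D : GC_exists v k N by exists D.
split; first exact: GC_exists_restr.
by apply: C_num_le; [apply: GC_exists_restr | exists N].
Qed.
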